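(* Let $E$ be an arbitrary directed graph and $(H,S)$ an admissible pair of $E$ with $H=H^{\bot\bot}$. Then $S^{\bot\bot}=B_H$.
   Context: Write $u\ge v$ if there is a path (possibly of length 0) from $u$ to $v$; $R(V)=\{u\mid u\ge v$ for some $v\in V\}$. $H\subseteq E^0$ is hereditary if closed under following paths; saturated if every vertex emitting a nonzero finite number of edges, all with ranges in $H$, lies in $H$. For hereditary saturated $H$, $B_H=\{v\in E^0-H\mid v$ emits infinitely many edges and $\mathbf{s}^{-1}(v)\cap\mathbf{r}^{-1}(E^0-H)$ is nonempty and finite$\}$. An admissible pair is $(H,S)$, $H$ hereditary saturated, $S\subseteq B_H$. For such a pair, $H^\bot=E^0-R(H)$, $S^\bot=B_{H^\bot}-S$, $H^{\bot\bot}=E^0-R(H^\bot)$, and $S^{\bot\bot}=B_{H^{\bot\bot}}-S^\bot$. *)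

From Stdlib Require Import List.

(* An arbitrary directed graph E = (E^0, E^1, s, r); no finiteness or
   countability assumptions. *)
Record Graph := mkGraph {
  vert : Type;
  edge : Type;
  src : edge -> vert;
  rng : edge -> vert }.

Definition finite_set {T : Type} (P : T -> Prop) : Prop :=
  exists l : list T, forall x, P x -> In x l.

Inductive geq (E : Graph) : vert E -> vert E -> Prop :=
  | geq_refl : forall u, geq E u u
  | geq_step : forall (e : edge E) v, geq E (rng E e) v -> geq E (src E e) v.

Definition Rset (E : Graph) (X : vert E -> Prop) : vert E -> Prop :=
  fun u => exists v, X v /\ geq E u v.

Definition hereditary (E : Graph) (H : vert E -> Prop) : Prop :=
  forall u v, H u -> geq E u v -> H v.

Definition saturated (E : Graph) (H : vert E -> Prop) : Prop :=
  forall v,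
    (exists e, src E e = v) ->
    finite_set (fun e => src E e = v) ->
    (forall e, src E e = v -> H (rng E e)) ->
    H v.

Definition Bset (E : Graph) (H : vert E -> Prop) : vert E -> Prop :=
  fun v =>
    ~ H v /\
    ~ finite_set (fun e => src E e = v) /\
    (exists e, src E e = v /\ ~ H (rng E e)) /\
    finite_set (fun e => src E e = v /\ ~ H (rng E e)).

Definition admissible (E : Graph) (H S : vert E -> Prop) : Prop :=
  hereditary E H /\ saturated E H /\ (forall v, S v -> Bset E H v).

Definition Hperp (E : Graph) (H : vert E -> Prop) : vert E -> Prop :=
  fun v => ~ Rset E H v.

Definition Sperp (E : Graph) (H S : vert E -> Prop) : vert E -> Prop :=
  fun v => Bset E (Hperp E H) v /\ ~ S v.

Definition Hperpperp (E : Graph) (H : vert E -> Prop) : vert E -> Prop :=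
  Hperp E (Hperp E H).

Definition Sperpperp (E : Graph) (H S : vert E -> Prop) : vert E -> Prop :=
  fun v => Bset E (Hperpperp E H) v /\ ~ Sperp E H S v.

From Stdlib Require Import List Classical.

(* Since H = H^perpperp, the sets B_{H^perpperp} and B_H coincide, so it only
   remains to see that S^perp, which lies in B_{H^perp}, misses B_H.  A vertex
   in both B_H and B_{H^perp} would emit only finitely many edges: the edges
   leaving H and the edges leaving H^perp are finitely many, and no range lies
   in H and in H^perp = E^0 - R(H) at once. *)

Lemma finite_set_sub {T : Type} (P Q : T -> Prop) :
  (forall x, P x -> Q x) -> finite_set Q -> finite_set P.
Proof. intros HPQ [l Hl]. exists l. auto. Qed.

Lemma finite_set_union {T : Type} (P A B : T -> Prop) :
  (forall x, P x -> A x \/ B x) -> finite_set A -> finite_set B -> finite_set P.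
Proof.
  intros HP [l1 H1] [l2 H2]. exists (l1 ++ l2). intros x Hx.
  apply in_or_app. destruct (HP x Hx); auto.
Qed.

Lemma Bset_ext (E : Graph) (H K : vert E -> Prop) :
  (forall v, H v <-> K v) -> forall v, Bset E H v -> Bset E K v.
Proof.
  intros HK v [HnH [Hinf [[e [He HeH]] Hfin]]].
  split; [|split; [|split]].
  - rewrite <- HK. exact HnH.
  - exact Hinf.
  - exists e. rewrite <- HK. auto.
  - apply (finite_set_sub _ _ (fun e (He : src E e = v /\ ~ K (rng E e)) =>
      conj (proj1 He) (fun h => proj2 He (proj1 (HK _) h)))).
    exact Hfin.
Qed.

Lemma Hperp_not (E : Graph) (H : vert E -> Prop) (v : vert E) :
  H v -> ~ Hperp E H v.
Proof. intros Hv Hp. apply Hp. exists v. split; [exact Hv | constructor]. Qed.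

Lemma Bset_Hperp_disjoint (E : Graph) (H : vert E -> Prop) (v : vert E) :
  Bset E H v -> ~ Bset E (Hperp E H) v.
Proof.
  intros [_ [Hinf [_ Hfin]]] [_ [_ [_ Hfin_perp]]].
  apply Hinf.
  apply (finite_set_union _ (fun e => src E e = v /\ ~ H (rng E e))
                            (fun e => src E e = v /\ ~ Hperp E H (rng E e)));
    [| exact Hfin | exact Hfin_perp].
  intros e He. destruct (classic (H (rng E e))) as [h | h].
  - right. split; [exact He | exact (Hperp_not E H _ h)].
  - left. auto.
Qed.

Theorem lemma3p9 (E : Graph) (H S : vert E -> Prop) :
  admissible E H S ->
  (forall v, H v <-> Hperpperp E H v) ->
  forall v, Sperpperp E H S v <-> Bset E H v.
Proof.
  intros _ Heq v. split.
  - intros [HB _]. apply (Bset_ext E (Hperpperp E H)); [|exact HB].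
    intro w. symmetry. apply Heq.
  - intros HB. split.
    + exact (Bset_ext E H _ Heq v HB).
    + intros [HB_perp _]. exact (Bset_Hperp_disjoint E H v HB HB_perp).
Qed.
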